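(* For every online scheduling algorithm there exists a feasible job stream (with speed functions $f_j(t)=t-r_j$) on which the algorithm misses the due date of at least one job, i.e., some job $j$ has completion time $C_j>d_j$.
   Context: Jobs $j$ have release time $r_j$, due date $d_j>r_j$, work $w_j>0$, and speed function $f_j(t)=t-r_j$ for $t\ge r_j$. A single processor runs at most one job at a time, preemption is allowed, and running job $j$ during a set of times $S$ completes $\int_S f_j(t)\,dt$ units of its work; $C_j$ is the time at which job $j$'s work $w_j$ is completed. A job stream is feasible if there exists a schedule in which every job runs only within $[r_j,d_j]$ and completes by $d_j$. In the online setting, job $j$ (together with $w_j$ and $d_j$) becomes known to the algorithm only at time $r_j$, and the algorithm's decisions up to time $t$ may depend only on jobs released by time $t$. *)

From HB Require Import structures.
From mathcomp Require Import all_boot all_order all_algebra.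
From mathcomp Require Import all_classical all_reals all_analysis.
Set Implicit Arguments. Unset Strict Implicit. Unset Printing Implicit Defensive.
Import Order.TTheory GRing.Theory Num.Theory.
Local Open Scope classical_set_scope.
Local Open Scope ring_scope.

(* A job: release time r, due date d, work w.  Its speed function is
   f_j(t) = t - r_j (for t >= r_j). *)
Record job (R : realType) := Job { rel : R; due : R; wrk : R }.

Definition job_ok (R : realType) (jb : job R) : Prop :=
  rel jb < due jb /\ 0 < wrk jb.

Definition stream (R : realType) := nat -> option (job R).

Definition stream_ok (R : realType) (J : stream R) : Prop :=
  (exists N, forall n, (N <= n)%N -> J n = None) /\
  (forall n jb, J n = Some jb -> job_ok jb).

(* A (single-processor, preemptive) schedule: at time t it runs at most one job. *)
Definition schedule (R : realType) := R -> option nat.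

Definition work (R : realType) (s : schedule R) (n : nat) (jb : job R) (T : R)
  : \bar R :=
  (\int[@lebesgue_measure R]_(t in `[rel jb, T])
      (if s t == Some n then t - rel jb else 0)%:E)%E.

(* Completion time C_j: the (first) time at which the work w_j is completed;
   +oo if never completed. *)
Definition completion (R : realType) (s : schedule R) (n : nat) (jb : job R)
  : \bar R :=
  ereal_inf [set T%:E | T in [set T : R | (wrk jb)%:E <= work s n jb T]%E].

Definition sched_measurable (R : realType) (s : schedule R) : Prop :=
  forall n : nat, measurable [set t : R | s t = Some n].

Definition feasible (R : realType) (J : stream R) : Prop :=
  exists s : schedule R,
    sched_measurable s /\
    (forall t n, s t = Some n ->
       exists jb, J n = Some jb /\ rel jb <= t <= due jb) /\
    (forall n jb, J n = Some jb -> (completion s n jb <= (due jb)%:E)%E).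

Definition algorithm (R : realType) := stream R -> schedule R.

Definition released_by (R : realType) (J : stream R) (t : R) : stream R :=
  fun n => match J n with
           | Some jb => if rel jb <= t then Some jb else None
           | None => None
           end.

Definition online (R : realType) (A : algorithm R) : Prop :=
  (forall J J' t, released_by J t = released_by J' t -> A J t = A J' t) /\
  (forall J, sched_measurable (A J)) /\
  (forall J t n, A J t = Some n -> exists jb, J n = Some jb /\ rel jb <= t).

(* Both job streams below contain a = (r 0, d 4, w 17/5) and b = (r 1, d 3, w 1/2);
   stream P adds c_P = (r 2, d 3, w 1/2) and stream Q adds c_Q = (r 3, d 4, w 1/2).
   Each is feasible, and an online algorithm cannot tell them apart before time 2.
   In P, job b must run during almost all of [1, 2), since afterwards c_P leaves too
   little room on [2, 3].  In Q, job c_Q occupies almost all of [3, 4], so job a, which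
   lost [1, 2) to b, collects at most about 1/2 + 5/2 = 3 < 17/5 units of work.
   Quantitatively, both claims integrate pointwise inequalities between nonnegative
   combinations of "ramps" t |-> t - c restricted to a set, which hold because at each
   instant only one job runs. *)

From mathcomp Require Import all_boot all_order all_algebra.
From mathcomp Require Import all_classical all_reals all_analysis.
From mathcomp Require Import measurable_realfun ring lra.
From Stdlib Require List.
Set Implicit Arguments. Unset Strict Implicit. Unset Printing Implicit Defensive.
Import Order.TTheory GRing.Theory Num.Theory numFieldNormedType.Exports.
Local Open Scope classical_set_scope.
Local Open Scope ring_scope.

Section ramp.
Variable R : realType.
Local Notation leb := (@lebesgue_measure R).

Definition ramp (A : set R) (c x : R) : R := \1_A x * (x - c).

Lemma rampE A c x : ramp A c x = if x \in A then x - c else 0.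
Proof. by rewrite /ramp indicE; case: (x \in A); rewrite ?mul1r ?mul0r. Qed.

Lemma ramp_itvE (i : interval R) c x :
  ramp [set` i] c x = if x \in i then x - c else 0.
Proof. by rewrite rampE mem_setE. Qed.

Lemma ramp_ge0 A c x : (forall y, A y -> c <= y) -> 0 <= ramp A c x.
Proof.
move=> Ac; rewrite rampE; case: ifPn => // /set_mem /Ac.
by rewrite subr_ge0.
Qed.

Lemma ramp_itv_ge0 (u c x : R) (b : itv_bound R) : c <= u ->
  0 <= ramp [set` Interval (BLeft u) b] c x.
Proof.
by move=> cu; apply: ramp_ge0 => y /=; rewrite in_itv /= => /andP[/(le_trans cu)].
Qed.

Lemma le_ramp A B c x : A `<=` B -> (forall y, B y -> c <= y) ->
  ramp A c x <= ramp B c x.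
Proof.
move=> AB Bc; rewrite !rampE; case: ifPn => [/set_mem xA|_].
  by rewrite (mem_set (AB _ xA)).
by rewrite -rampE; exact: ramp_ge0.
Qed.

Lemma measurable_ramp A c : measurable A -> measurable_fun setT (ramp A c).
Proof.
move=> mA; apply: measurable_funM; first exact: measurable_indic.
by apply: measurable_funB => //; exact: measurable_id.
Qed.

Lemma integral_rampE A c :
  (\int[leb]_x (ramp A c x)%:E = \int[leb]_(x in A) (x - c)%:E)%E.
Proof.
rewrite [RHS]integral_mkcond; apply: eq_integral => x _.
by rewrite patchE rampE; case: ifP.
Qed.

Lemma integral_ramp_itv (b0 b1 : bool) (u v c : R) : u < v ->
  (\int[leb]_x (ramp [set` Interval (BSide b0 u) (BSide b1 v)] c x)%:E =
   (((v - c) ^+ 2 - (u - c) ^+ 2) / 2)%:E)%E.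
Proof.
move=> uv; have mf : measurable_fun `]u, v[ (fun x : R => (x - c)%:E).
  by apply/measurable_EFinP; apply: measurable_funB => //; exact: measurable_id.
rewrite integral_rampE integral_itv_bndoo // -(integral_itv_bndoo true false) //.
pose F x : R := (x - c) * (x - c) / 2.
have cF : continuous F.
  move=> x; apply: cvgM; last exact: cvg_cst.
  by apply: cvgM; apply: cvgB; (exact: cvg_id || exact: cvg_cst).
rewrite (@continuous_FTC2 _ _ F) //=.
- by rewrite -EFinD; congr (_%:E); rewrite /F; lra.
- apply: continuous_subspaceT => x.
  by apply: cvgB; [exact: cvg_id | exact: cvg_cst].
- split.
  + by move=> x _; apply: derivableM.
  + exact: cvg_at_right_filter (cF u).
  + exact: cvg_at_left_filter (cF v).
- move=> x _; rewrite derive1E deriveM // deriveM // deriveB // derive_id.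
  rewrite derive_cst derive_cst !scaler0 subr0 !scaler1 add0r /GRing.scale /=.
  by field.
Qed.

Record wramp := WRamp { coef : R; supp : set R; origin : R }.

Definition wramp_ok (p : wramp) :=
  [/\ 0 <= coef p, measurable (supp p) & forall x, supp p x -> origin p <= x].

Definition wramps_ok (F : seq wramp) : Prop := List.Forall wramp_ok F.

Definition wramp_sum (F : seq wramp) (x : R) : R :=
  \sum_(p <- F) coef p * ramp (supp p) (origin p) x.

Lemma wramp_ok_itvI k (u c : R) (b : itv_bound R) (S : set R) :
  0 <= k -> c <= u -> measurable S ->
  wramp_ok (WRamp k ([set` Interval (BLeft u) b] `&` S) c).
Proof.
move=> k0 cu mS; split => //=; first exact: measurableI.
by move=> x [/=]; rewrite in_itv /= => /andP[ux _] _; apply: le_trans ux.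
Qed.

Lemma wramp_ok_itv k (u c : R) (b : itv_bound R) : 0 <= k -> c <= u ->
  wramp_ok (WRamp k [set` Interval (BLeft u) b] c).
Proof.
move=> k0 cu; rewrite -[X in WRamp _ X]setIT; exact: wramp_ok_itvI.
Qed.

Lemma wramp_sum_cons p F x :
  wramp_sum (p :: F) x = coef p * ramp (supp p) (origin p) x + wramp_sum F x.
Proof. by rewrite /wramp_sum big_cons. Qed.

Lemma wramp_sum_ok F : wramps_ok F ->
  measurable_fun setT (wramp_sum F) /\ forall x, 0 <= wramp_sum F x.
Proof.
elim=> [|p {}F [k0 mA Ac] _ [mF F0]].
  have -> : wramp_sum [::] = cst 0 by apply/funext => x; rewrite /wramp_sum big_nil.
  by split=> //; exact: measurable_cst.
split=> [|x]; last by rewrite wramp_sum_cons addr_ge0 // mulr_ge0 // ramp_ge0.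
rewrite (_ : wramp_sum _ = fun x => coef p * ramp (supp p) (origin p) x + wramp_sum F x).
  apply: measurable_funD => //; apply: measurable_funM => //; exact: measurable_ramp.
by apply/funext => x; rewrite wramp_sum_cons.
Qed.

Lemma integral_wramp_sum F : wramps_ok F ->
  (\int[leb]_x (wramp_sum F x)%:E =
   \sum_(p <- F) (coef p)%:E * \int[leb]_x (ramp (supp p) (origin p) x)%:E)%E.
Proof.
elim=> [|p {}F [k0 mA Ac] okF IH].
  by rewrite big_nil; under eq_integral do rewrite /wramp_sum big_nil; exact: integral0.
have [mF F0] := wramp_sum_ok okF.
rewrite big_cons -IH -ge0_integralZl_EFin //; last first.
  by apply/measurable_EFinP; exact: measurable_ramp.
  by move=> x _; rewrite lee_fin; exact: ramp_ge0.
rewrite -ge0_integralD //.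
- by apply: eq_integral => x _; rewrite wramp_sum_cons EFinD EFinM.
- by move=> x _; rewrite lee_fin mulr_ge0 // ramp_ge0.
- by apply/measurable_EFinP; apply: measurable_funM => //; exact: measurable_ramp.
- by move=> x _; rewrite lee_fin.
- exact/measurable_EFinP.
Qed.

Lemma le_integral_wramp_sum F G : wramps_ok F -> wramps_ok G ->
  (forall x, wramp_sum F x <= wramp_sum G x) ->
  (\sum_(p <- F) (coef p)%:E * \int[leb]_x (ramp (supp p) (origin p) x)%:E <=
   \sum_(p <- G) (coef p)%:E * \int[leb]_x (ramp (supp p) (origin p) x)%:E)%E.
Proof.
move=> okF okG FG; rewrite -!integral_wramp_sum //.
have [mF F0] := wramp_sum_ok okF; have [mG _] := wramp_sum_ok okG.
apply: ge0_le_integral => //.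
- by move=> x _; rewrite lee_fin.
- exact/measurable_EFinP.
- exact/measurable_EFinP.
- by move=> x _; rewrite lee_fin.
Qed.
End ramp.

Section work.
Variable R : realType.
Local Notation leb := (@lebesgue_measure R).

Definition run (s : schedule R) (n : nat) : set R := [set t | s t = Some n].

Lemma ramp_runE (A : set R) (s : schedule R) n (c x : R) :
  ramp (A `&` run s n) c x = if s x == Some n then ramp A c x else 0.
Proof.
rewrite !rampE in_setI; have -> : (x \in run s n) = (s x == Some n).
  by apply/idP/eqP => [/set_mem|/mem_set].
by case: (s x == Some n); rewrite ?andbT ?andbF.
Qed.

Lemma workE (s : schedule R) n (jb : job R) (T : R) :
  work s n jb T = (\int[leb]_x (ramp (`[rel jb, T] `&` run s n) (rel jb) x)%:E)%E.
Proof.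
rewrite /work integral_mkcond; apply: eq_integral => x _.
by rewrite patchE ramp_runE rampE; case: (x \in _) => //; case: (s x == Some n).
Qed.

Lemma le_work (s : schedule R) n (jb : job R) (T T' : R) :
  measurable (run s n) -> T <= T' -> (work s n jb T <= work s n jb T')%E.
Proof.
move=> mS TT'; rewrite !workE; apply: ge0_le_integral => //.
- by move=> x _; rewrite lee_fin ramp_ge0 // => y [/=]; rewrite in_itv /= => /andP[].
- by apply/measurable_EFinP; apply: measurable_ramp; apply: measurableI.
- by apply/measurable_EFinP; apply: measurable_ramp; apply: measurableI.
- move=> x _; rewrite lee_fin le_ramp //.
    by move=> y [/=]; rewrite !in_itv /= => /andP[-> yT]; rewrite (le_trans yT).
  by move=> y [/=]; rewrite in_itv /= => /andP[].
Qed.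

Lemma completion_le_of_work (s : schedule R) n (jb : job R) (T : R) :
  ((wrk jb)%:E <= work s n jb T)%E -> (completion s n jb <= T%:E)%E.
Proof. by move=> wT; apply: ereal_inf_lbound; exists T. Qed.

Lemma work_of_completion_le (s : schedule R) n (jb : job R) (d e : R) :
  measurable (run s n) -> 0 < e ->
  (completion s n jb <= d%:E)%E -> ((wrk jb)%:E <= work s n jb (d + e))%E.
Proof.
move=> mS e0 Cd; have : (completion s n jb < (d + e)%:E)%E.
  by apply: le_lt_trans Cd _; rewrite lte_fin ltrDl.
case/ereal_inf_lt => _ [T /= wT <-]; rewrite lte_fin => /ltW Tde.
by apply: le_trans wT _; exact: le_work.
Qed.

Lemma completion_le_run (s : schedule R) n (jb : job R) (u v d : R) :
  measurable (run s n) -> rel jb <= u -> u < v -> v <= d ->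
  (forall t, u <= t < v -> s t = Some n) ->
  wrk jb <= ((v - rel jb) ^+ 2 - (u - rel jb) ^+ 2) / 2 ->
  (completion s n jb <= d%:E)%E.
Proof.
move=> mS ru uv vd runs w_le; apply: completion_le_of_work.
apply: le_trans _ (le_work jb mS vd); rewrite workE.
apply: le_trans (_ : (\int[leb]_x (ramp `[u, v[ (rel jb) x)%:E <= _)%E).
  by rewrite integral_ramp_itv // lee_fin.
apply: ge0_le_integral => //.
- by move=> x _; rewrite lee_fin ramp_itv_ge0.
- by apply/measurable_EFinP; apply: measurable_ramp.
- by apply/measurable_EFinP; apply: measurable_ramp; apply: measurableI.
- move=> x _; rewrite lee_fin le_ramp //.
    move=> y /=; rewrite in_itv /= => /andP[uy yv]; split; last by apply: runs; rewrite uy.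
    by rewrite /= in_itv /= (le_trans ru uy) ltW.
  by move=> y [/=]; rewrite in_itv /= => /andP[].
Qed.
End work.

Section piecewise.
Variable R : realType.

Fixpoint piecewise (l : seq (interval R * nat)) (t : R) : option nat :=
  if l is (i, m) :: l' then if t \in i then Some m else piecewise l' t else None.

Lemma piecewise_measurable l : sched_measurable (piecewise l).
Proof.
move=> n; elim: l => [|[i m] l IH] /=.
  by rewrite (_ : [set t | None = Some n] = set0) //; apply/seteqP; split=> t.
have -> : [set t | (if t \in i then Some m else piecewise l t) = Some n] =
    ([set` i] `&` [set _ | m = n]) `|` (~` [set` i] `&` [set t | piecewise l t = Some n]).
  apply/seteqP; split=> t /=; case: ifPn => ti.
  - by case=> mn; left.
  - by move=> lt; right; split=> //; exact/negP.
  - by case=> [[_ ->] | [/(_ isT)]].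
  - by case=> [[ti' _] | [_ ->]] //; rewrite ti' in ti.
apply: measurableU; apply: measurableI => //.
- have [->|mn] := eqVneq m n.
    by rewrite (_ : [set _ | n = n] = setT) //; apply/seteqP; split=> t.
  rewrite (_ : [set _ | m = n] = set0) //.
  by apply/seteqP; split=> // t /= /eqP; rewrite (negbTE mn).
- exact: measurableC.
Qed.

Lemma piecewise_Some l t n :
  piecewise l t = Some n -> exists2 i, (i, n) \in l & t \in i.
Proof.
elim: l => [|[i m] l IH] //=; case: ifPn => ti.
  by case=> <-; exists i; rewrite ?mem_head.
by case/IH=> j jl tj; exists j; rewrite // in_cons jl orbT.
Qed.
End piecewise.

Section adversary.
Variable R : realType.

Definition job_a : job R := Job 0 4 (17 / 5).
Definition job_b : job R := Job 1 3 (1 / 2).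
Definition job_cP : job R := Job 2 3 (1 / 2).
Definition job_cQ : job R := Job 3 4 (1 / 2).

Definition stream3 (c : job R) : stream R := fun n =>
  match n with 0 => Some job_a | 1 => Some job_b | 2 => Some c | _ => None end%N.

Lemma stream3_ok c : job_ok c -> stream_ok (stream3 c).
Proof.
move=> c_ok; split; first by exists 3%N => -[|[|[|n]]].
by move=> [|[|[|n]]] jb //= [<-] //; split=> /=; lra.
Qed.

Lemma released_by_stream3 c c' t : t < rel c -> t < rel c' ->
  released_by (stream3 c) t = released_by (stream3 c') t.
Proof.
move=> tc tc'; apply/funext => -[|[|[|n]]] //.
by rewrite /released_by /= !leNgt tc tc'.
Qed.

Lemma piecewise_feasible (J : stream R) (l : seq (interval R * nat)) :
  (forall t n, piecewise l t = Some n ->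
     exists jb, J n = Some jb /\ rel jb <= t <= due jb) ->
  (forall n jb, J n = Some jb -> (completion (piecewise l) n jb <= (due jb)%:E)%E) ->
  feasible J.
Proof. by exists (piecewise l); split; first exact: piecewise_measurable. Qed.

Ltac runs_on_piece := by move=> t /andP[? ?]; rewrite /= !in_itv /=;
  do ![rewrite ifT; last by apply/andP; split; lra
      | rewrite ifF; last by apply/negbTE/negP => /andP[? ?]; lra].

Ltac inside_windows := move=> t n /piecewise_Some [i]; rewrite !in_cons in_nil orbF =>
  /or3P[] /eqP[-> ->]; rewrite in_itv /= => /andP[? ?];
  (eexists; split; first reflexivity); rewrite /=; apply/andP; split; lra.

Lemma feasible_P : feasible (stream3 job_cP).
Proof.
apply: (@piecewise_feasible _
    [:: (`[1, 2[%R, 1%N); (`[2, 3[%R, 2%N); (`[3, 4[%R, 0%N)]); first by inside_windows.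
move=> [|[|[|n]]] jb // [<-].
- apply: (@completion_le_run _ _ _ _ 3 4 4 (piecewise_measurable _ _)) => /=;
    try lra; runs_on_piece.
- apply: (@completion_le_run _ _ _ _ 1 2 3 (piecewise_measurable _ _)) => /=;
    try lra; runs_on_piece.
- apply: (@completion_le_run _ _ _ _ 2 3 3 (piecewise_measurable _ _)) => /=;
    try lra; runs_on_piece.
Qed.

Lemma feasible_Q : feasible (stream3 job_cQ).
Proof.
apply: (@piecewise_feasible _
    [:: (`[0, 27 / 10[%R, 0%N); (`[27 / 10, 3[%R, 1%N); (`[3, 4[%R, 2%N)]).
  by inside_windows.
move=> [|[|[|n]]] jb // [<-].
- apply: (@completion_le_run _ _ _ _ 0 (27 / 10) 4 (piecewise_measurable _ _)) => /=;
    try lra; runs_on_piece.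
- apply: (@completion_le_run _ _ _ _ (27 / 10) 3 3 (piecewise_measurable _ _)) => /=;
    try lra; runs_on_piece.
- apply: (@completion_le_run _ _ _ _ 3 4 4 (piecewise_measurable _ _)) => /=;
    try lra; runs_on_piece.
Qed.

(* Completion times are infima, so a due date d only yields the work done by d + eps.
   Each weight makes the later job's weighted ramp overtake the earlier job's speed
   exactly at the end of a short overlap: K theta = 1 + theta, L eta = 1 + eta and
   M eta = 3 + eta. *)
Local Notation eps := (1 / 10 ^+ 5 : R).
Local Notation theta := (1 / 200 : R).
Local Notation eta := (1 / 20 : R).
Local Notation K := (1 + 1 / theta).
Local Notation L := (1 + 1 / eta).
Local Notation M := (1 + 3 / eta).

Ltac decide_itv_ifs := repeat (match goal with
  | |- context [if ?b then _ else _] =>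
      first [ have -> : b = false by apply/negbTE/negP => /andP[? ?]; lra
            | have -> : b = true by apply/andP; split; lra
            | have [/andP[? ?] | /nandP[|]] := boolP b; rewrite -?ltNge -?leNgt; try move=> ? ]
  end; rewrite /=).

Lemma pointwise_P_b x : ramp `[1, 3 + eps] 1 x <=
  ramp `[1, 2[ 1 x + (K * ramp `[2, 3 + eps] 2 x + ramp `[2, 2 + theta] 1 x).
Proof. by rewrite !ramp_itvE !in_itv /=; decide_itv_ifs; lra. Qed.

Lemma pointwise_Q_a x : ramp `[0, 4 + eps] 0 x <=
  ramp `[0, 1 + eta] 0 x + L * ramp `[1, 2] 1 x + ramp `[2, 3 + eta] 0 x
    + M * ramp `[3, 4 + eps] 3 x.
Proof. by rewrite !ramp_itvE !in_itv /=; decide_itv_ifs; lra. Qed.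

Lemma pointwise_P (s : schedule R) x :
  ramp (`[1, 3 + eps] `&` run s 1) 1 x + K * ramp (`[2, 3 + eps] `&` run s 2) 2 x <=
  ramp (`[1, 2[ `&` run s 1) 1 x + (K * ramp `[2, 3 + eps] 2 x + ramp `[2, 2 + theta] 1 x).
Proof.
have := pointwise_P_b x; have := @ramp_itv_ge0 R 2 2 x (BRight (3 + eps)) (lexx _).
have := @ramp_itv_ge0 R 2 1 x (BRight (2 + theta)) ltac:(lra).
by rewrite !ramp_runE; case: (s x) => [[|[|[|n]]]|] /=; lra.
Qed.

Lemma pointwise_Q (s : schedule R) x :
  ramp (`[0, 4 + eps] `&` run s 0) 0 x + L * ramp (`[1, 2[ `&` run s 1) 1 x
    + M * ramp (`[3, 4 + eps] `&` run s 2) 3 x <=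
  ramp `[0, 1 + eta] 0 x + L * ramp `[1, 2] 1 x + ramp `[2, 3 + eta] 0 x
    + M * ramp `[3, 4 + eps] 3 x.
Proof.
have := pointwise_Q_a x; have : ramp `[1, 2[ 1 x <= ramp `[1, 2] 1 x.
  by apply: le_ramp => [y /=|y /=]; rewrite !in_itv /= => /andP[// ->]; move/ltW.
have := @ramp_itv_ge0 R 0 0 x (BRight (1 + eta)) (lexx _).
have := @ramp_itv_ge0 R 1 1 x (BRight 2) (lexx _).
have := @ramp_itv_ge0 R 2 0 x (BRight (3 + eta)) ltac:(lra).
have := @ramp_itv_ge0 R 3 3 x (BRight (4 + eps)) (lexx _).
by rewrite !ramp_runE; case: (s x) => [[|[|[|n]]]|] /=; lra.
Qed.

Lemma no_schedule_meets_both (sP sQ : schedule R) :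
  sched_measurable sP -> sched_measurable sQ -> (forall t, t < 2 -> sP t = sQ t) ->
  (completion sP 1 job_b <= 3%:E)%E -> (completion sP 2 job_cP <= 3%:E)%E ->
  (completion sQ 0 job_a <= 4%:E)%E -> (completion sQ 2 job_cQ <= 4%:E)%E ->
  False.
Proof.
move=> msP msQ agree Cb CcP Ca CcQ; have eps_gt0 : (0 : R) < eps by lra.
have := work_of_completion_le (msP 1%N) eps_gt0 Cb; rewrite workE => wb.
have := work_of_completion_le (msP 2%N) eps_gt0 CcP; rewrite workE => wcP.
have := work_of_completion_le (msQ 0%N) eps_gt0 Ca; rewrite workE => wa.
have := work_of_completion_le (msQ 2%N) eps_gt0 CcQ; rewrite workE => wcQ.
pose F := [:: WRamp L (`[1, 3 + eps] `&` run sP 1) 1;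
  WRamp (L * K) (`[2, 3 + eps] `&` run sP 2) 2;
  WRamp 1 (`[0, 4 + eps] `&` run sQ 0) 0; WRamp M (`[3, 4 + eps] `&` run sQ 2) 3].
pose G := [:: WRamp (L * K) `[2, 3 + eps] 2; WRamp L `[2, 2 + theta] 1;
  WRamp 1 `[0, 1 + eta] 0; WRamp L `[1, 2] 1; WRamp 1 `[2, 3 + eta] 0; WRamp M `[3, 4 + eps] 3].
have okF : wramps_ok F.
  by do ![apply: List.Forall_cons;
    first by apply: wramp_ok_itvI; [lra | lra | exact: msP || exact: msQ]].
have okG : wramps_ok G.
  by do ![apply: List.Forall_cons; first by apply: wramp_ok_itv; lra].
(* L * pointwise_P + pointwise_Q, in which the work of b during [1, 2) cancels. *)
have FG x : wramp_sum F x <= wramp_sum G x.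
  have b_agree : ramp (`[1, 2[ `&` run sP 1) 1 x = ramp (`[1, 2[ `&` run sQ 1) 1 x.
    rewrite !ramp_runE; have [/agree -> // | x2] := ltP x 2.
    by rewrite ramp_itvE in_itv /= ltNge x2 andbF /= !if_same.
  have := pointwise_P sP x; have := pointwise_Q sQ x; rewrite b_agree.
  rewrite /wramp_sum !big_cons big_nil /=; lra.
have := le_integral_wramp_sum okF okG FG.
rewrite /F /G !big_cons !big_nil /= !integral_ramp_itv; [|lra..].
apply/negP; rewrite -ltNge.
apply: (@lt_le_trans _ _
  ((L * (1 / 2) + (L * K * (1 / 2) + (1 * (17 / 5) + (M * (1 / 2) + 0))))%:E)).
  by rewrite -!EFinM -!EFinD lte_fin; lra.
rewrite !EFinD !EFinM.
by do !apply: leeD => //; apply: lee_wpmul2l => //; rewrite lee_fin; lra.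
Qed.
End adversary.

Theorem theorem3 (R : realType) (A : algorithm R) :
  online A ->
  exists J : stream R,
    stream_ok J /\ feasible J /\
    exists n jb, J n = Some jb /\ ((due jb)%:E < completion (A J) n jb)%E.
Proof.
move=> [causal [measA _]].
pose JP := stream3 (job_cP R); pose JQ := stream3 (job_cQ R).
have on_time J n jb :
    ~ (exists n jb, J n = Some jb /\ ((due jb)%:E < completion (A J) n jb)%E) ->
    J n = Some jb -> (completion (A J) n jb <= (due jb)%:E)%E.
  by move=> no_miss Jn; rewrite leNgt; apply/negP => late; apply: no_miss; exists n, jb.
have [missP|okP] :=
  pselect (exists n jb, JP n = Some jb /\ ((due jb)%:E < completion (A JP) n jb)%E).
  by exists JP; split; [apply: stream3_ok; split=> /=; lra | split; [exact: feasible_P |]].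
have [missQ|okQ] :=
  pselect (exists n jb, JQ n = Some jb /\ ((due jb)%:E < completion (A JQ) n jb)%E).
  by exists JQ; split; [apply: stream3_ok; split=> /=; lra | split; [exact: feasible_Q |]].
have agree t : t < 2 -> A JP t = A JQ t.
  by move=> t2; apply: causal; apply: released_by_stream3 => /=; lra.
exfalso; apply: (no_schedule_meets_both (measA JP) (measA JQ) agree
  (on_time _ 1%N _ okP erefl) (on_time _ 2%N _ okP erefl)
  (on_time _ 0%N _ okQ erefl) (on_time _ 2%N _ okQ erefl)).
Qed.
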